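(* Let $\alpha_N,\alpha_B$ be distinct nonzero real numbers with $\alpha_B=-\alpha_N$, and let $0<t_0\le1$ be fixed. Put $T=3+t_0^2$ and, for $\theta\in[-\pi,\pi]^2$, $F=1+e^{i\theta_1}+e^{i\theta_2}$. Consider $$M(\eta,\theta)=\begin{pmatrix}-T\eta-\alpha_N&\bar F&0&t_0^2\\ F&-T\eta-\alpha_B&t_0^2&0\\ 0&t_0^2&-T\eta&\bar F\\ t_0^2&0&F&-T\eta\end{pmatrix}.$$ Then the dispersion relation obtained from the hBN–graphene bilayer stacking (the root branches $\eta$ of $\det M(\eta,\theta)=0$) always has a gap at $F=0$, i.e. no two branches touch at $F=0$.
   Context: This models a two-layer heterostructure as a periodic Schrödinger quantum graph (edges of length 1, even continuous potential $q_0$): a lower hexagonal layer with two alternating atom types (parameters $\delta_N$ at type-$A$ and $\delta_B$ at type-$B$ vertices, modelling hexagonal boron nitride) and an upper hexagonal layer with one atom type (parameter $\delta_C$, modelling graphene), joined by vertical edges with weak coupling $t_0$ and modified Neumann vertex conditions $u_{a_1}(v)=u_{a_2}(v)=u_f(v)/t_0$, $\sum_a u_a'(v)\pm\sum_f t_0u_f'(v)=\delta_vu(v)$. For $\lambda$ outside the Dirichlet spectrum, with $\varphi_0,\varphi_1$ solutions of $-\varphi''+q_0\varphi=\lambda\varphi$ with $\varphi_0(0)=1,\varphi_0(1)=0,\varphi_1(0)=0,\varphi_1(1)=1$, set $\eta=\varphi_1'(1)/\varphi_1'(0)$, $\alpha_k=\delta_k/\varphi_1'(0)$ (treated as constants),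 and the carbon parameter is taken $\alpha_C=0$. $\lambda$ lies in the spectrum iff $\det M(\eta(\lambda),\theta)=0$ for some $\theta$; the dispersion relation is identified with the root branches $\eta$ as functions of $F$. *)

From HB Require Import structures.
From mathcomp Require Import all_boot all_order all_algebra.
From mathcomp Require Import all_classical all_reals all_analysis.
From mathcomp Require Import complex.
Set Implicit Arguments. Unset Strict Implicit. Unset Printing Implicit Defensive.
Import Order.TTheory GRing.Theory Num.Theory.
Local Open Scope ring_scope.
Local Open Scope complex_scope.

Section Bilayer.
Variable R : realType.

Definition Fq (th1 th2 : R) : R[i] :=
  1 + (cos th1 +i* sin th1) + (cos th2 +i* sin th2).

Definition Mpoly (aN aB t0 th1 th2 : R) : 'M[{poly R[i]}]_4 :=
  let T : R[i] := (3 + t0 ^+ 2)%:C in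
  let F := Fq th1 th2 in
  let t2 : R[i] := (t0 ^+ 2)%:C in
  \matrix_(i < 4, j < 4)
    match nat_of_ord i, nat_of_ord j with
    | 0, 0 => - (T%:P * 'X) - (aN%:C)%:P
    | 0, 1 => (F^*)%:P
    | 0, 3 => t2%:P
    | 1, 0 => F%:P
    | 1, 1 => - (T%:P * 'X) - (aB%:C)%:P
    | 1, 2 => t2%:P
    | 2, 1 => t2%:P
    | 2, 2 => - (T%:P * 'X)
    | 2, 3 => (F^*)%:P
    | 3, 0 => t2%:P
    | 3, 2 => F%:P
    | 3, 3 => - (T%:P * 'X)
    | _, _ => 0
    end.

Definition Mmat (aN aB t0 th1 th2 : R) (eta : R[i]) : 'M[R[i]]_4 :=
  map_mx (fun p : {poly R[i]} => p.[eta]) (Mpoly aN aB t0 th1 th2).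

Definition dispersion_poly (aN aB t0 th1 th2 : R) : {poly R[i]} :=
  \det (Mpoly aN aB t0 th1 th2).

End Bilayer.

From HB Require Import structures.
From mathcomp Require Import all_boot all_order all_algebra.
From mathcomp Require Import all_classical all_reals all_analysis.
From mathcomp Require Import complex ring.
Set Implicit Arguments.
Unset Strict Implicit.
Unset Printing Implicit Defensive.

Import Order.TTheory GRing.Theory Num.Theory.
Local Open Scope ring_scope.
Local Open Scope complex_scope.

(* At F = 0 the matrix M splits, after reordering the basis, into two 2x2 blocks
   [[-T eta - a, t0^2], [t0^2, -T eta]] with a = aN resp. aB = -aN, so
   det M = q_+ q_- with q_(+/-) = T eta (T eta +/- aN) - t0^4.  Each q_(+/-) has
   discriminant aN^2 + 4 t0^4 > 0, hence only simple roots; and q_+ - q_- = 2 aN T eta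
   while q_(+/-)(0) = -t0^4 != 0, so q_+ and q_- have no common root.  Every root
   of det M is therefore simple. *)

Lemma det_mx44 (R : comPzRingType) (A : 'M[R]_4) :
  let a i j := A (inord i) (inord j) in
  \det A =
    a 0 0 * (a 1 1 * (a 2 2 * a 3 3 - a 2 3 * a 3 2) - a 1 2 * (a 2 1 * a 3 3 - a 2 3 * a 3 1) + a 1 3 * (a 2 1 * a 3 2 - a 2 2 * a 3 1))
  - a 0 1 * (a 1 0 * (a 2 2 * a 3 3 - a 2 3 * a 3 2) - a 1 2 * (a 2 0 * a 3 3 - a 2 3 * a 3 0) + a 1 3 * (a 2 0 * a 3 2 - a 2 2 * a 3 0))
  + a 0 2 * (a 1 0 * (a 2 1 * a 3 3 - a 2 3 * a 3 1) - a 1 1 * (a 2 0 * a 3 3 - a 2 3 * a 3 0) + a 1 3 * (a 2 0 * a 3 1 - a 2 1 * a 3 0))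
  - a 0 3 * (a 1 0 * (a 2 1 * a 3 2 - a 2 2 * a 3 1) - a 1 1 * (a 2 0 * a 3 2 - a 2 2 * a 3 0) + a 1 2 * (a 2 0 * a 3 1 - a 2 1 * a 3 0)).
Proof.
move=> a; have -> : A = \matrix_(i, j) a i j.
  by apply/matrixP=> i j; rewrite mxE /a !inord_val.
do 3!rewrite ?/cofactor !(expand_det_row _ ord0) !big_ord_recr !big_ord0 /=.
by rewrite /cofactor !det_mx11 !mxE /=; ring.
Qed.

Definition block_poly (R : nzRingType) (c a s : R) : {poly R} :=
  c%:P * 'X * (c%:P * 'X + a%:P) - (s ^+ 2)%:P.

Lemma simple_root_mul (R : idomainType) (p q : {poly R}) (z : R) :
  root p z -> ~~ root p^`() z -> ~~ root q z -> ~~ root (p * q)^`() z.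
Proof.
rewrite /root derivM hornerD !hornerM => /eqP-> dp_z q_z.
by rewrite mul0r addr0 mulf_neq0.
Qed.

Section BlockPoly.
Variable R : idomainType.
Implicit Types c a s z : R.

Lemma horner_block_poly c a s z :
  (block_poly c a s).[z] = c * z * (c * z + a) - s ^+ 2.
Proof. by rewrite /block_poly !(hornerD, hornerN, hornerM, hornerC, hornerX). Qed.

Lemma horner_deriv_block_poly c a s z :
  (block_poly c a s)^`().[z] = c * (2%:R * c * z + a).
Proof.
by rewrite /block_poly !(derivB, derivD, derivM, derivC, derivX) !hornerE; ring.
Qed.

Lemma block_poly_root_simple c a s z :
  c != 0 -> a ^+ 2 + 4%:R * s ^+ 2 != 0 ->
  root (block_poly c a s) z -> ~~ root (block_poly c a s)^`() z.
Proof.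
move=> c0 disc0 /eqP q_z.
have square : 4%:R * (block_poly c a s).[z] =
              (2%:R * c * z + a) ^+ 2 - (a ^+ 2 + 4%:R * s ^+ 2).
  by rewrite horner_block_poly; ring.
rewrite /root horner_deriv_block_poly mulf_neq0 //; apply: contra disc0 => /eqP lin.
by move: square; rewrite q_z lin mulr0 expr2 mul0r sub0r => /eqP; rewrite eq_sym oppr_eq0.
Qed.

Lemma block_poly_roots_disjoint c a s z :
  c != 0 -> a != 0 -> s != 0 -> 2%:R != 0 :> R ->
  root (block_poly c a s) z -> ~~ root (block_poly c (- a) s) z.
Proof.
move=> c0 a0 s0 two0 /eqP qa_z; apply/negP => /eqP qb_z.
have /eqP : 2%:R * a * c * z = 0.
  by rewrite -(subrr 0) -{1}qa_z -qb_z !horner_block_poly; ring.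
rewrite !mulf_eq0 (negbTE two0) (negbTE a0) (negbTE c0) /= => /eqP z0.
move: qa_z; rewrite z0 horner_block_poly mulr0 mul0r sub0r => /eqP.
by rewrite oppr_eq0 expf_eq0 (negbTE s0) andbF.
Qed.

End BlockPoly.

Lemma dispersion_poly_F0 (R : realType) (aN t0 th1 th2 : R) :
  Fq th1 th2 = 0 ->
  dispersion_poly aN (- aN) t0 th1 th2 =
  block_poly (3 + t0 ^+ 2)%:C aN%:C (t0 ^+ 2)%:C *
  block_poly (3 + t0 ^+ 2)%:C (- aN)%:C (t0 ^+ 2)%:C.
Proof.
move=> F0; rewrite /dispersion_poly det_mx44 /Mpoly /= !mxE !inordK //=.
rewrite F0 conjC0 /block_poly rmorphN /=.
ring.
Qed.

Theorem mainTheorem5 (R : realType) (aN aB t0 : R) :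
  aN != 0 -> aB != 0 -> aN != aB -> aB = - aN ->
  0 < t0 -> t0 <= 1 ->
  forall th1 th2 : R,
    - pi <= th1 <= pi -> - pi <= th2 <= pi ->
    Fq th1 th2 = 0 ->
    forall eta : R[i],
      root (dispersion_poly aN aB t0 th1 th2) eta ->
      ~~ root (dispersion_poly aN aB t0 th1 th2)^`() eta.
Proof.
move=> aN0 _ _ -> t0_gt0 _ th1 th2 _ _ F0 eta.
rewrite dispersion_poly_F0 // rmorphN /=.
set c := (3 + t0 ^+ 2)%:C; set a := aN%:C; set s := (t0 ^+ 2)%:C.
have c0 : c != 0 by rewrite fmorph_eq0 gt_eqF // ltr_wpDr ?sqr_ge0.
have a0 : a != 0 by rewrite fmorph_eq0.
have s0 : s != 0 by rewrite fmorph_eq0 expf_neq0 // gt_eqF.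
have two0 : 2%:R != 0 :> R[i] by rewrite pnatr_eq0.
have disc0 : a ^+ 2 + 4%:R * s ^+ 2 != 0.
  rewrite -!rmorphXn -(rmorph_nat (real_complex R)) -rmorphM -rmorphD fmorph_eq0.
  rewrite lt0r_neq0 // (ltr_wpDr (mulr_ge0 (ler0n _ 4) (sqr_ge0 _))) //.
  by rewrite exprn_even_gt0 // aN0 orbT.
rewrite rootM => /orP[qa_eta | qb_eta].
- apply: (simple_root_mul qa_eta); first exact: block_poly_root_simple.
  exact: block_poly_roots_disjoint.
- rewrite mulrC; apply: (simple_root_mul qb_eta).
    by apply: block_poly_root_simple; rewrite ?sqrrN.
  by rewrite -[a]opprK block_poly_roots_disjoint ?oppr_eq0.
Qed.
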